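(* Let $t,t',t_1,t_1',t_2,t_2'$ be YampaCore terms of the appropriate types and $v$ a value. If $t_1\equiv t_1'$ and $t_2\equiv t_2'$ then $\mathsf{Comp}\,t_1\,t_2\equiv\mathsf{Comp}\,t_1'\,t_2'$; if $t\equiv t'$ then $\mathsf{First}\,t\equiv\mathsf{First}\,t'$; if $t\equiv t'$ then $\mathsf{Loop}\,v\,t\equiv\mathsf{Loop}\,v\,t'$.
   Context: Host language: types are sets, functions total, with binary products. YampaCore terms: $\mathsf{Arr}\,f:\mathsf{SF}\,A\,B$ for $f:A\to B$; $\mathsf{Comp}\,t_1\,t_2:\mathsf{SF}\,A\,C$ for $t_1:\mathsf{SF}\,A\,B$, $t_2:\mathsf{SF}\,B\,C$; $\mathsf{First}\,t:\mathsf{SF}(A\times C)(B\times C)$ for $t:\mathsf{SF}\,A\,B$; $\mathsf{Loop}\,v\,t:\mathsf{SF}\,A\,B$ for $v:C$, $t:\mathsf{SF}(A\times C)(B\times C)$. $\mathsf{sf}\,A\,B$ is the final-coalgebra type with $\mathsf{sf}\,A\,B\cong A\to(B\times\mathsf{sf}\,A\,B)$. Semantics: $\mathrm{step}(\mathsf{Arr}\,f)=\mathit{arr}\,f$, $\mathrm{step}(\mathsf{Comp}\,t_1t_2)=\mathit{comp}(\mathrm{step}\,t_1)(\mathrm{step}\,t_2)$, $\mathrm{step}(\mathsf{First}\,t)=\mathit{first}(\mathrm{step}\,t)$, $\mathrm{step}(\mathsf{Loop}\,v\,t)=\mathit{loop}\,v\,(\mathrm{step}\,t)$, where corecursively $\mathit{arr}\,f=\lambda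 x.(f\,x,\mathit{arr}\,f)$; $\mathit{comp}\,s_1\,s_2=\lambda a.(c,\mathit{comp}\,s_1'\,s_2')$ with $(b,s_1')=s_1 a$, $(c,s_2')=s_2 b$; $\mathit{first}\,s=\lambda(x,z).((y,z),\mathit{first}\,s')$ with $(y,s')=s\,x$; $\mathit{loop}\,v\,s=\lambda x.(y,\mathit{loop}\,v'\,s')$ with $((y,v'),s')=s(x,v)$. A relation $R$ on $\mathsf{sf}\,A\,B$ is a bisimulation if whenever $R\,s_1\,s_2$ and $s_1\,a=(b,s_1')$ then $s_2\,a=(b,s_2')$ for some $s_2'$ with $R\,s_1'\,s_2'$; $\sim$ is the largest bisimulation. $t_1\equiv t_2$ iff $\mathrm{step}\,t_1\sim\mathrm{step}\,t_2$. *)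

(* Final coalgebra sf A B ≅ A -> B * sf A B, as a coinductive type. *)
CoInductive sf (A B : Type) : Type :=
  SF : (A -> B * sf A B) -> sf A B.
Arguments SF {A B} _.

Definition run {A B : Type} (s : sf A B) : A -> B * sf A B :=
  match s with SF f => f end.

Inductive term : Type -> Type -> Type :=
| Arr   : forall {A B : Type}, (A -> B) -> term A B
| Comp  : forall {A B C : Type}, term A B -> term B C -> term A C
| First : forall {A B C : Type}, term A B -> term (A * C) (B * C)
| Loop  : forall {A B C : Type}, C -> term (A * C) (B * C) -> term A B.

CoFixpoint arr {A B : Type} (f : A -> B) : sf A B :=
  SF (fun x => (f x, arr f)).

CoFixpoint comp {A B C : Type} (s1 : sf A B) (s2 : sf B C) : sf A C :=
  SF (fun a => let (b, s1') := run s1 a in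
               let (c, s2') := run s2 b in
               (c, comp s1' s2')).

CoFixpoint first {A B C : Type} (s : sf A B) : sf (A * C) (B * C) :=
  SF (fun xz : A * C => let (x, z) := xz in
                let (y, s') := run s x in
                ((y, z), first s')).

CoFixpoint loop {A B C : Type} (v : C) (s : sf (A * C) (B * C)) : sf A B :=
  SF (fun x => let (yv', s') := run s (x, v) in
               let (y, v') := yv' in
               (y, loop v' s')).

Fixpoint step {A B : Type} (t : term A B) : sf A B :=
  match t in term A B return sf A B with
  | Arr f => arr f
  | Comp t1 t2 => comp (step t1) (step t2)
  | First t => first (step t)
  | Loop v t => loop v (step t)
  end.

Definition is_bisimulation {A B : Type} (R : sf A B -> sf A B -> Prop) : Prop :=
  forall s1 s2, R s1 s2 ->
    forall a b s1', run s1 a = (b, s1') ->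
      exists s2', run s2 a = (b, s2') /\ R s1' s2'.

Definition bisimilar {A B : Type} (s1 s2 : sf A B) : Prop :=
  exists R, is_bisimulation R /\ R s1 s2.

Definition term_equiv {A B : Type} (t1 t2 : term A B) : Prop :=
  bisimilar (step t1) (step t2).


(* Each combinator consults its argument signal functions only through their
   one-step outputs and successors, and rebuilds itself from those successors.
   Hence the pairs obtained by applying a combinator to bisimilar arguments form
   a bisimulation, since bisimilarity is itself one. *)

Lemma bisimilar_is_bisimulation {A B : Type} : is_bisimulation (@bisimilar A B).
Proof.
  intros s1 s2 [R [HR H12]] a b s1' E1.
  destruct (HR _ _ H12 _ _ _ E1) as [s2' [E2 H12']].
  exists s2'. split; [exact E2 | exists R; split; assumption].
Qed.

Inductive comp_rel {A B C : Type} : sf A C -> sf A C -> Prop :=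
| CompRel (s1 s1' : sf A B) (s2 s2' : sf B C) :
    bisimilar s1 s1' -> bisimilar s2 s2' -> comp_rel (comp s1 s2) (comp s1' s2').

Lemma comp_rel_is_bisimulation {A B C : Type} : is_bisimulation (@comp_rel A B C).
Proof.
  intros x y [s1 s1' s2 s2' H1 H2] a c x' E; simpl in E.
  destruct (run s1 a) as [b t1] eqn:E1.
  destruct (run s2 b) as [c' t2] eqn:E2.
  injection E as <- <-.
  destruct (bisimilar_is_bisimulation _ _ H1 _ _ _ E1) as [t1' [E1' H1']].
  destruct (bisimilar_is_bisimulation _ _ H2 _ _ _ E2) as [t2' [E2' H2']].
  exists (comp t1' t2'). simpl. rewrite E1', E2'.
  split; [reflexivity | constructor; assumption].
Qed.

Lemma comp_bisimilar {A B C : Type} (s1 s1' : sf A B) (s2 s2' : sf B C) :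
  bisimilar s1 s1' -> bisimilar s2 s2' -> bisimilar (comp s1 s2) (comp s1' s2').
Proof.
  intros H1 H2. exists (comp_rel (B:=B)).
  split; [apply comp_rel_is_bisimulation | constructor; assumption].
Qed.

Inductive first_rel {A B C : Type} : sf (A * C) (B * C) -> sf (A * C) (B * C) -> Prop :=
| FirstRel (s s' : sf A B) : bisimilar s s' -> first_rel (first s) (first s').

Lemma first_rel_is_bisimulation {A B C : Type} : is_bisimulation (@first_rel A B C).
Proof.
  intros x y [s s' H] [a z] bz x' E; simpl in E.
  destruct (run s a) as [b t] eqn:Es.
  injection E as <- <-.
  destruct (bisimilar_is_bisimulation _ _ H _ _ _ Es) as [t' [Es' H']].
  exists (first t'). simpl. rewrite Es'.
  split; [reflexivity | constructor; assumption].
Qed.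

Lemma first_bisimilar {A B C : Type} (s s' : sf A B) :
  bisimilar s s' -> bisimilar (first (C:=C) s) (first (C:=C) s').
Proof.
  intros H. exists (first_rel (B:=B)).
  split; [apply first_rel_is_bisimulation | constructor; assumption].
Qed.

(* The loop state is quantified over, as it changes at every step. *)
Inductive loop_rel {A B C : Type} : sf A B -> sf A B -> Prop :=
| LoopRel (v : C) (s s' : sf (A * C) (B * C)) :
    bisimilar s s' -> loop_rel (loop v s) (loop v s').

Lemma loop_rel_is_bisimulation {A B C : Type} : is_bisimulation (@loop_rel A B C).
Proof.
  intros x y [v s s' H] a b x' E; simpl in E.
  destruct (run s (a, v)) as [[b' w] t] eqn:Es.
  injection E as <- <-.
  destruct (bisimilar_is_bisimulation _ _ H _ _ _ Es) as [t' [Es' H']].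
  exists (loop w t'). simpl. rewrite Es'.
  split; [reflexivity | constructor; assumption].
Qed.

Lemma loop_bisimilar {A B C : Type} (v : C) (s s' : sf (A * C) (B * C)) :
  bisimilar s s' -> bisimilar (loop v s) (loop v s').
Proof.
  intros H. exists (loop_rel (C:=C)).
  split; [apply loop_rel_is_bisimulation | constructor; assumption].
Qed.

Theorem lemma2 :
  (forall (A B C : Type) (t1 t1' : term A B) (t2 t2' : term B C),
      term_equiv t1 t1' -> term_equiv t2 t2' ->
      term_equiv (Comp t1 t2) (Comp t1' t2'))
  /\ (forall (A B C : Type) (t t' : term A B),
      term_equiv t t' -> term_equiv (First (C:=C) t) (First (C:=C) t'))
  /\ (forall (A B C : Type) (v : C) (t t' : term (A * C) (B * C)),
      term_equiv t t' -> term_equiv (Loop v t) (Loop v t')).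
Proof.
  unfold term_equiv; simpl. split; [| split].
  - intros; apply comp_bisimilar; assumption.
  - intros; apply first_bisimilar; assumption.
  - intros; apply loop_bisimilar; assumption.
Qed.
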